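(* For general parameters $a_j,b_j,c_j$, consider the following four elements of $G_1$, each of which has isolated fixed points on $T$: $k_{10}=[-1,1,1,-1,1,-1,1]$, $k_{11}=[-1,1,1,1,-1,1,-1]$, $k_{12}=[1,1,-1,-1,1,1,-1]$, $k_{13}=[1,1,-1,1,-1,-1,1]$. Then each of $k_{11},k_{12},k_{13}$ has fixed points lying on the base locus of the pencil $\{\hat X_\lambda\}_{\lambda}$ (i.e. on $\bigcap_\lambda\hat X_\lambda$), whereas no fixed point of $k_{10}$ lies on this base locus.
   Context: Setup (quadric model). Let $a_1,a_2,a_3,b_1,b_2,b_3,c_1,c_2,c_3\in\mathbb C$ be general, so that the following three curves are smooth elliptic curves: $E_1=\{(x_0:x_1:x_2:x_3)\in\mathbb P^3: x_1^2+x_2^2+x_3^2=0,\ x_0^2=a_1x_1^2+a_2x_2^2+a_3x_3^2\}$, $E_2=\{(u_0:u_1:u_2:u_3)\in\mathbb P^3: u_1^2+u_2^2+u_3^2=0,\ u_0^2=b_1u_1^2+b_2u_2^2+b_3u_3^2\}$, $E_3=\{(z_0:z_1:z_2:z_3)\in\mathbb P^3: z_1^2+z_2^2+z_3^2=0,\ z_0^2=c_1z_1^2+c_2z_2^2+c_3z_3^2\}$. Let $T=E_1\times E_2\times E_3$, $\pi':T\to P_1:=C_1\times C_2\times C_3$ forgetting $x_0,u_0,z_0$ ($C_j\subset\mathbb P^2$ the conics $x_1^2+x_2^2+x_3^2=0$ etc.), with $C_j\cong\mathbb P^1$ via $(s_1:t_1)=(x_1+ix_2:x_3)=(-x_3:x_1-ix_2)$,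 $(s_2:t_2)=(u_1+iu_2:u_3)=(-u_3:u_1-iu_2)$, $(s_3:t_3)=(z_1+iz_2:z_3)=(-z_3:z_1-iz_2)$. For $\lambda\in\mathbb C$, $Y_\lambda=\{s_1s_2s_3=\lambda t_1t_2t_3\}\subset P_1$ and $\hat X_\lambda=\pi'^{-1}(Y_\lambda)$, a pencil of surfaces in $T$. For $\epsilon_0,\eta_1,\epsilon_1,\eta_0,\epsilon_2,\zeta_0,\epsilon_3\in\{\pm1\}$ with $\epsilon_1\epsilon_2\epsilon_3=1$, $[\epsilon_0,\eta_1,\epsilon_1,\eta_0,\epsilon_2,\zeta_0,\epsilon_3]$ denotes the automorphism of $T$: $(x_0:x_1:x_2:x_3)\mapsto(\epsilon_0x_0:\eta_1x_1:x_2:\epsilon_1x_3)$, $(u_0:u_1:u_2:u_3)\mapsto(\eta_0u_0:\eta_1u_1:u_2:\epsilon_2u_3)$, $(z_0:z_1:z_2:z_3)\mapsto(\zeta_0z_0:\eta_1z_1:z_2:\epsilon_3z_3)$; $G_1$ is the group of those with $\eta_1=1$. *)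

(* complex numbers modelled by algC (algebraically closed, with 'i). *)
From HB Require Import structures.
From mathcomp Require Import all_boot all_order all_algebra all_field.
Set Implicit Arguments. Unset Strict Implicit. Unset Printing Implicit Defensive.
Import Order.TTheory GRing.Theory Num.Theory.
Local Open Scope ring_scope.

Record P3v := mkP3 { c0 : algC; c1 : algC; c2 : algC; c3 : algC }.

Definition nonzeroP3 (v : P3v) : Prop :=
  ~ (c0 v = 0 /\ c1 v = 0 /\ c2 v = 0 /\ c3 v = 0).

Definition projEq (v w : P3v) : Prop :=
  exists mu : algC, mu != 0 /\
    c0 w = mu * c0 v /\ c1 w = mu * c1 v /\ c2 w = mu * c2 v /\ c3 w = mu * c3 v.

Definition onE (a1 a2 a3 : algC) (v : P3v) : Prop :=
  nonzeroP3 v /\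
  c1 v ^+ 2 + c2 v ^+ 2 + c3 v ^+ 2 = 0 /\
  c0 v ^+ 2 = a1 * c1 v ^+ 2 + a2 * c2 v ^+ 2 + a3 * c3 v ^+ 2.

(* A point of T = E1 x E2 x E3 (given by representatives). *)
Definition ptT := (P3v * P3v * P3v)%type.

Definition onT (a1 a2 a3 b1 b2 b3 c1' c2' c3' : algC) (p : ptT) : Prop :=
  onE a1 a2 a3 p.1.1 /\ onE b1 b2 b3 p.1.2 /\ onE c1' c2' c3' p.2.

Definition actE (e0 h1 e1 : algC) (v : P3v) : P3v :=
  mkP3 (e0 * c0 v) (h1 * c1 v) (c2 v) (e1 * c3 v).

(* the automorphism [eps0,eta1,eps1,eta0,eps2,zeta0,eps3] of T *)
Definition autT (eps0 eta1 eps1 eta0 eps2 zeta0 eps3 : algC) (p : ptT) : ptT :=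
  (actE eps0 eta1 eps1 p.1.1, actE eta0 eta1 eps2 p.1.2, actE zeta0 eta1 eps3 p.2).

Definition fixedPt (g : ptT -> ptT) (p : ptT) : Prop :=
  projEq p.1.1 (g p).1.1 /\ projEq p.1.2 (g p).1.2 /\ projEq p.2 (g p).2.

(* (s,t) is a representative of the point (s:t) in P^1 which is the image of
   the conic point v under the isomorphism C ~ P^1,
   (s:t) = (w1 + i w2 : w3) = (-w3 : w1 - i w2). *)
Definition isST (v : P3v) (s t : algC) : Prop :=
  ~ (s = 0 /\ t = 0) /\
  s * c3 v = t * (c1 v + 'i * c2 v) /\
  s * (c1 v - 'i * c2 v) = - t * c3 v.

(* p lies on hat X_lambda = pi'^{-1}(Y_lambda), Y_lambda = {s1 s2 s3 = lambda t1 t2 t3} *)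
Definition inXhat (lambda : algC) (p : ptT) : Prop :=
  exists s1 t1 s2 t2 s3 t3 : algC,
    isST p.1.1 s1 t1 /\ isST p.1.2 s2 t2 /\ isST p.2 s3 t3 /\
    s1 * s2 * s3 = lambda * (t1 * t2 * t3).

Definition baseLocus (p : ptT) : Prop := forall lambda : algC, inXhat lambda p.

Definition k10 := autT (-1) 1 1 (-1) 1 (-1) 1.
Definition k11 := autT (-1) 1 1 1 (-1) 1 (-1).
Definition k12 := autT 1 1 (-1) (-1) 1 1 (-1).
Definition k13 := autT 1 1 (-1) 1 (-1) (-1) 1.

Definition distinct3 (x y z : algC) : Prop := x != y /\ y != z /\ x != z.

From HB Require Import structures.
From mathcomp Require Import all_boot all_order all_algebra all_field.
From mathcomp Require Import ring.
Import Order.TTheory GRing.Theory Num.Theory.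
Local Open Scope ring_scope.
Set Implicit Arguments.

(* Each factor of the automorphisms is a diagonal map of P^3 acting on one
   elliptic curve E, either x0 |-> -x0 or x3 |-> -x3.  A point with x0 = 0
   is fixed by the first, a point with x3 = 0 by the second.  On a conic
   {x1^2+x2^2+x3^2 = 0} the two points with x3 = 0 are x1 = -/+ i x2, whose
   P^1-coordinates are (s:t) = (0:1) and (1:0); their lifts to E are
   explicit.  Since X_lambda = {s1 s2 s3 = lambda t1 t2 t3}, a point with
   some s_j = 0 and some t_k = 0 lies on every X_lambda.  Hence for k11,
   k12, k13 a base point is obtained by taking a point with x0 = 0 on the
   factor where x0 |-> -x0 and the points over (0:1) and (1:0) on the two
   other factors.  Conversely k10 changes the sign of x0 on all three
   factors, so its fixed points have x0 = u0 = z0 = 0; but a point of E with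
   x0 = 0 never lies over s = 0 (this uses a1 <> a2), so no fixed point of
   k10 lies on X_0, let alone on the base locus. *)

Lemma sqr_add_sqr_factor (x y : algC) :
  (x - 'i * y) * (x + 'i * y) = x ^+ 2 + y ^+ 2.
Proof.
have -> : (x - 'i * y) * (x + 'i * y) = x ^+ 2 - 'i ^+ 2 * y ^+ 2 by ring.
by rewrite sqrCi mulN1r opprK.
Qed.

(* Every point of the conic x1^2+x2^2+x3^2 = 0 has a P^1-coordinate (s:t):
   take (-x3 : x1 - i x2) unless both vanish, and (x1 + i x2 : 0) otherwise. *)
Lemma isST_exists (v : P3v) :
  c1 v ^+ 2 + c2 v ^+ 2 + c3 v ^+ 2 = 0 ->
  ~ (c1 v = 0 /\ c2 v = 0 /\ c3 v = 0) -> exists s t, isST v s t.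
Proof.
move=> conic nz.
have conic' : c1 v ^+ 2 + c2 v ^+ 2 = - c3 v ^+ 2.
  by apply/eqP; rewrite -subr_eq0 opprK; apply/eqP.
have [/andP[/eqP d0 /eqP x3_0] | d_nz] :=
  boolP ((c1 v - 'i * c2 v == 0) && (c3 v == 0)).
- have x1E : c1 v = 'i * c2 v by apply/eqP; rewrite -subr_eq0; apply/eqP.
  exists (c1 v + 'i * c2 v), 0; split; last by split; rewrite ?d0 x3_0; ring.
  move=> [s0 _]; apply: nz.
  have : 'i * c2 v *+ 2 = 0 by rewrite mulr2n -{1}x1E s0.
  move/eqP; rewrite mulrn_eq0 /= mulf_eq0 (negbTE (neq0Ci _)) /= => /eqP x2_0.
  by rewrite x1E x2_0 mulr0 x3_0.
- exists (- c3 v), (c1 v - 'i * c2 v); split; last split.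
  + move=> [/eqP s0 t0]; move: d_nz; rewrite t0 eqxx /=.
    by move: s0; rewrite oppr_eq0 => ->.
  + rewrite mulrC sqr_add_sqr_factor conic'; ring.
  + ring.
Qed.

Lemma actE_fixed (e0 h1 e1 : algC) (v : P3v) :
  e0 = 1 \/ c0 v = 0 -> h1 = 1 \/ c1 v = 0 -> e1 = 1 \/ c3 v = 0 ->
  projEq v (actE e0 h1 e1 v).
Proof.
have fix_coord (e x : algC) : e = 1 \/ x = 0 -> e * x = 1 * x.
  by case=> ->; rewrite ?mulr0.
move=> f0 f1 f3; exists 1; rewrite oner_eq0 /=.
by do !split; rewrite ?fix_coord // mul1r.
Qed.

(* A point of E fixed by x0 |-> -x0 has x0 = 0: a proportionality factor
   mu <> 1 would kill x1, x2, x3 and then x0 as well. *)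
Lemma fixed_sign_c0 (a1 a2 a3 : algC) (v : P3v) :
  onE a1 a2 a3 v -> projEq v (actE (-1) 1 1 v) -> c0 v = 0.
Proof.
move=> [nz [_ quadric]] [mu [_ [/= f0 [/= f1 [/= f2 /= f3]]]]].
have [mu1 | mu_n1] := eqVneq mu 1.
  move: f0; rewrite mu1 mul1r mulN1r => /eqP.
  by rewrite eq_sym -subr_eq0 opprK -mulr2n mulrn_eq0 /= => /eqP.
have kill (x : algC) : 1 * x = mu * x -> x = 0.
  move=> /eqP; rewrite -subr_eq0 -mulrBl mulf_eq0 subr_eq0 eq_sym.
  by rewrite (negbTE mu_n1) => /eqP.
move: quadric; rewrite (kill _ f1) (kill _ (etrans (mul1r _) f2)) (kill _ f3).
by rewrite expr0n /= !mulr0 !addr0 => /eqP; rewrite expf_eq0 /= => /eqP.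
Qed.

(* A point of E with x0 = 0 does not lie over s = 0 when a1 <> a2: over
   s = 0 we have x3 = 0 and x1 = -i x2, so x0^2 = (a2 - a1) x2^2. *)
Lemma c0_zero_not_over_s0 (a1 a2 a3 : algC) (v : P3v) (t : algC) :
  onE a1 a2 a3 v -> a1 != a2 -> c0 v = 0 -> ~ isST v 0 t.
Proof.
move=> [nz [_ quadric]] a12 x0_0 [st_nz [e1 e2]].
have t_nz : t != 0 by apply/eqP => t0; apply: st_nz.
move: e1; rewrite mul0r => /esym /eqP.
rewrite mulf_eq0 (negbTE t_nz) /= => /eqP d0.
move: e2; rewrite mul0r mulNr => /esym /eqP.
rewrite oppr_eq0 mulf_eq0 (negbTE t_nz) /= => /eqP x3_0.
have x1E : c1 v = - ('i * c2 v) by apply/eqP; rewrite -addr_eq0; apply/eqP.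
have x2_0 : c2 v = 0.
  move: quadric; rewrite x0_0 x3_0 x1E.
  have -> : a1 * (- ('i * c2 v)) ^+ 2 + a2 * c2 v ^+ 2 + a3 * 0 ^+ 2
     = (a2 - a1 + a1 * ('i ^+ 2 + 1)) * c2 v ^+ 2 by ring.
  rewrite sqrCi addNr mulr0 addr0 expr0n /= => /esym /eqP.
  by rewrite mulf_eq0 subr_eq0 eq_sym (negbTE a12) /= expf_eq0 /= => /eqP.
by apply: nz; rewrite x1E x2_0 x3_0 x0_0 mulr0 oppr0.
Qed.

(* The points of E over (s:t) = (0:1) and (1:0), and a point of E with
   x0 = 0 (all determined up to the choice of square roots). *)
Definition ptS0 (a1 a2 : algC) := mkP3 (sqrtC (a2 - a1)) (- 'i) 1 0.
Definition ptT0 (a1 a2 : algC) := mkP3 (sqrtC (a2 - a1)) 'i 1 0.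
Definition ptX0 (a1 a2 a3 : algC) :=
  mkP3 0 (sqrtC (a2 - a3)) (sqrtC (a3 - a1)) (sqrtC (a1 - a2)).

Lemma onE_ptS0 (a1 a2 a3 : algC) : onE a1 a2 a3 (ptS0 a1 a2).
Proof.
split; last by split=> /=; rewrite ?sqrtCK sqrrN sqrCi; ring.
by move=> [_ [_ [/eqP]]]; rewrite oner_eq0.
Qed.

Lemma onE_ptT0 (a1 a2 a3 : algC) : onE a1 a2 a3 (ptT0 a1 a2).
Proof.
split; last by split=> /=; rewrite ?sqrtCK sqrCi; ring.
by move=> [_ [_ [/eqP]]]; rewrite oner_eq0.
Qed.

Lemma onE_ptX0 (a1 a2 a3 : algC) : distinct3 a1 a2 a3 -> onE a1 a2 a3 (ptX0 a1 a2 a3).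
Proof.
move=> [_ [a23 _]]; split; last by split=> /=; rewrite !sqrtCK; ring.
move=> [_ [/= /eqP]]; rewrite sqrtC_eq0 subr_eq0 => a2E _.
by move: a23; rewrite a2E.
Qed.

Lemma isST_ptS0 (a1 a2 : algC) : isST (ptS0 a1 a2) 0 1.
Proof. by split; [case=> _ /eqP; rewrite oner_eq0 | split=> /=; ring]. Qed.

Lemma isST_ptT0 (a1 a2 : algC) : isST (ptT0 a1 a2) 1 0.
Proof. by split; [case=> /eqP; rewrite oner_eq0 | split=> /=; ring]. Qed.

Lemma isST_ptX0 (a1 a2 a3 : algC) :
  distinct3 a1 a2 a3 -> exists s t, isST (ptX0 a1 a2 a3) s t.
Proof.
move=> a_dist; have [nz [conic _]] := onE_ptX0 a_dist.
by apply: isST_exists => // -[x1_0 [x2_0 x3_0]]; apply: nz.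
Qed.

Lemma ptX0_fixed (a1 a2 a3 : algC) :
  projEq (ptX0 a1 a2 a3) (actE (-1) 1 1 (ptX0 a1 a2 a3)).
Proof. by apply: actE_fixed; [right | left | left]. Qed.

Lemma ptS0_fixed (a1 a2 : algC) : projEq (ptS0 a1 a2) (actE 1 1 (-1) (ptS0 a1 a2)).
Proof. by apply: actE_fixed; [left | left | right]. Qed.

Lemma ptT0_fixed (a1 a2 : algC) : projEq (ptT0 a1 a2) (actE 1 1 (-1) (ptT0 a1 a2)).
Proof. by apply: actE_fixed; [left | left | right]. Qed.

Lemma baseLocus_intro (v1 v2 v3 : P3v) (s1 t1 s2 t2 s3 t3 : algC) :
  isST v1 s1 t1 -> isST v2 s2 t2 -> isST v3 s3 t3 ->
  s1 * s2 * s3 = 0 -> t1 * t2 * t3 = 0 -> baseLocus (v1, v2, v3).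
Proof.
move=> st1 st2 st3 s0 t0 lambda.
by exists s1, t1, s2, t2, s3, t3; rewrite s0 t0 mulr0.
Qed.

(* No fixed point of k10 lies on X_0 = {s1 s2 s3 = 0}: its coordinates
   x0, u0, z0 all vanish, which excludes s_j = 0 on every factor. *)
Lemma k10_fixed_not_on_X0 (a1 a2 a3 b1 b2 b3 c1 c2 c3 : algC) (p : ptT) :
  distinct3 a1 a2 a3 -> distinct3 b1 b2 b3 -> distinct3 c1 c2 c3 ->
  onT a1 a2 a3 b1 b2 b3 c1 c2 c3 p -> fixedPt k10 p -> ~ inXhat 0 p.
Proof.
move=> [a12 _] [b12 _] [c12 _] [on1 [on2 on3]] [fix1 [fix2 fix3]].
move=> [s1 [t1 [s2 [t2 [s3 [t3 [st1 [st2 [st3 /eqP]]]]]]]]].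
rewrite mul0r !mulf_eq0 -orbA => /or3P[] /eqP s0.
- by move: st1; rewrite s0; apply: c0_zero_not_over_s0 on1 a12 (fixed_sign_c0 on1 fix1).
- by move: st2; rewrite s0; apply: c0_zero_not_over_s0 on2 b12 (fixed_sign_c0 on2 fix2).
- by move: st3; rewrite s0; apply: c0_zero_not_over_s0 on3 c12 (fixed_sign_c0 on3 fix3).
Qed.

Theorem mainTheorem6 (a1 a2 a3 b1 b2 b3 c1 c2 c3 : algC) :
  distinct3 a1 a2 a3 -> distinct3 b1 b2 b3 -> distinct3 c1 c2 c3 ->
  (exists p, onT a1 a2 a3 b1 b2 b3 c1 c2 c3 p /\ fixedPt k11 p /\ baseLocus p) /\
  (exists p, onT a1 a2 a3 b1 b2 b3 c1 c2 c3 p /\ fixedPt k12 p /\ baseLocus p) /\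
  (exists p, onT a1 a2 a3 b1 b2 b3 c1 c2 c3 p /\ fixedPt k13 p /\ baseLocus p) /\
  ~ (exists p, onT a1 a2 a3 b1 b2 b3 c1 c2 c3 p /\ fixedPt k10 p /\ baseLocus p).
Proof.
move=> a_dist b_dist c_dist; split; [|split; [|split]].
- have [s [t st]] := isST_ptX0 a_dist.
  exists (ptX0 a1 a2 a3, ptS0 b1 b2, ptT0 c1 c2); split; [|split].
  + by split; [exact: onE_ptX0 | split; [exact: onE_ptS0 | exact: onE_ptT0]].
  + rewrite /fixedPt /k11 /autT /=.
    by split; [exact: ptX0_fixed | split; [exact: ptS0_fixed | exact: ptT0_fixed]].
  + by apply: (baseLocus_intro st (isST_ptS0 _ _) (isST_ptT0 _ _)); ring.
- have [s [t st]] := isST_ptX0 b_dist.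
  exists (ptS0 a1 a2, ptX0 b1 b2 b3, ptT0 c1 c2); split; [|split].
  + by split; [exact: onE_ptS0 | split; [exact: onE_ptX0 | exact: onE_ptT0]].
  + rewrite /fixedPt /k12 /autT /=.
    by split; [exact: ptS0_fixed | split; [exact: ptX0_fixed | exact: ptT0_fixed]].
  + by apply: (baseLocus_intro (isST_ptS0 _ _) st (isST_ptT0 _ _)); ring.
- have [s [t st]] := isST_ptX0 c_dist.
  exists (ptS0 a1 a2, ptT0 b1 b2, ptX0 c1 c2 c3); split; [|split].
  + by split; [exact: onE_ptS0 | split; [exact: onE_ptT0 | exact: onE_ptX0]].
  + rewrite /fixedPt /k13 /autT /=.
    by split; [exact: ptS0_fixed | split; [exact: ptT0_fixed | exact: ptX0_fixed]].
  + by apply: (baseLocus_intro (isST_ptS0 _ _) (isST_ptT0 _ _) st); ring.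
- move=> [p [onp [fixp base]]].
  exact: (k10_fixed_not_on_X0 a_dist b_dist c_dist onp fixp (base 0)).
Qed.
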